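(* Let $X\in\mathbb{R}^{n\times r}$ with $X^{\mathsf{T}}X=I_r$ represent a point of $\operatorname{Gr}(n,r)$ and let $X_\perp\in\mathbb{R}^{n\times(n-r)}$ be such that $[X\;X_\perp]$ is orthogonal. Let $\Delta\in\mathbf{T}_X$, let $X(t)$ be the geodesic and $T_{X,\Delta}(t)$ the transport matrix determined by $\Delta$, and let $X_\perp(t)=T_{X,\Delta}(t)X_\perp$. Identify $\mathbf{T}_X$ with $\mathbb{R}^{(n-r)r}$ via $\Delta_1=X_\perp D_1\mapsto \operatorname{vec}(D_1)$, and consider a linear operator in local coordinates $\hat A:\mathbb{R}^{(n-r)r}\to\mathbb{R}^{(n-r)r}$ together with the corresponding linear operator in global coordinates $A:\mathbb{R}^{nr}\to\mathbb{R}^{nr}$ (in which tangents in $\mathbf{T}_X$ are embedded via $\Delta_1\mapsto\operatorname{vec}(\Delta_1)$). Then \[ A=(I\otimes X_\perp)\hat A(I\otimes X_\perp^{\mathsf{T}}),\qquad \hat A=(I\otimes X_\perp^{\mathsf{T}})A(I\otimes X_\perp). \] Furthermore, the parallel transported operator has the same local representation for all $t$ along the geodesic: if $A(t)=(I\otimes T_{X,\Delta}(t))\,A\,(I\otimes \widetilde T(t))$, where $\widetilde T(t)=T_{X(t),-\Delta(t)}(t)$ with $\Delta(t)=T_{X,\Delta}(t)\Delta$ is the transport matrix from $X(t)$ back to $X$ along the same geodesic, and $\hat A(t)=(I\otimes X_\perp(t)^{\mathsf{T}})A(t)(I\otimes X_\perp(t))$, then $\hat A(t)=\hat A$ for all 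$t$.
   Context: Points of $\operatorname{Gr}(n,r)$ are represented by $n\times r$ matrices with orthonormal columns; $\mathbf{T}_X=\{\Delta\in\mathbb{R}^{n\times r}:X^{\mathsf{T}}\Delta=0\}$, and every tangent can be written $\Delta=X_\perp D$ with $D=X_\perp^{\mathsf{T}}\Delta\in\mathbb{R}^{(n-r)\times r}$ (local coordinates). For $\Delta=U\Sigma V^{\mathsf{T}}$ a thin SVD, the geodesic is $X(t)=[XV\;U]\begin{bmatrix}\cos\Sigma t\\ \sin\Sigma t\end{bmatrix}V^{\mathsf{T}}$ and the transport matrix is $T_{X,\Delta}(t)=[XV\;U]\begin{bmatrix}-\sin\Sigma t\\ \cos\Sigma t\end{bmatrix}U^{\mathsf{T}}+(I-UU^{\mathsf{T}})$; a tangent $\Delta_2\in\mathbf{T}_X$ is parallel transported to $T_{X,\Delta}(t)\Delta_2\in\mathbf{T}_{X(t)}$. $\operatorname{vec}$ is column-wise vectorization, $I=I_r$, and $\otimes$ is the Kronecker product, so $\operatorname{vec}(X_\perp D)=(I_r\otimes X_\perp)\operatorname{vec}(D)$. The global-coordinate operator $A$ corresponding to $\hat A$ is the operator that maps $\operatorname{vec}(X_\perp D_1)$ to $\operatorname{vec}(X_\perp D_2)$ whenever $\operatorname{vec}(D_2)=\hat A\operatorname{vec}(D_1)$, acting on vectorized tangents through the projection $I\otimes X_\perp X_\perp^{\mathsf{T}}$ onto the tangent space. *)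

From HB Require Import structures.
From mathcomp Require Import all_boot all_order all_algebra.
From mathcomp Require Import all_classical all_reals all_analysis.

Set Implicit Arguments.
Unset Strict Implicit.
Unset Printing Implicit Defensive.

Import Order.TTheory GRing.Theory Num.Theory.
Local Open Scope ring_scope.

(* Column-wise vectorization: vec M (M : m x k) is the column vector of
   length k*m whose entry at index [mxvec_index j i] is M i j. *)
Definition vec (R : Type) (m k : nat) (M : 'M[R]_(m, k)) : 'cV[R]_(k * m) :=
  (mxvec M^T)^T.

(* Kronecker product, consistent with [vec]:
   (kron A B) (mxvec_index a i) (mxvec_index b j) = A a b * B i j,
   so that vec (X *m D) = kron 1 X *m vec D. *)
Definition kron (R : pzRingType) (p q m k : nat)
    (A : 'M[R]_(p, q)) (B : 'M[R]_(m, k)) : 'M[R]_(p * m, q * k) :=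
  \matrix_(I, J)
    (let ai := enum_val (cast_ord (esym (mxvec_cast p m)) I) in
     let bj := enum_val (cast_ord (esym (mxvec_cast q k)) J) in
     A ai.1 bj.1 * B ai.2 bj.2).

Section Grassmann.
Variable R : realType.

Definition cosS (r : nat) (s : 'rV[R]_r) (t : R) : 'M[R]_r :=
  diag_mx (\row_i cos (s 0 i * t)).
Definition sinS (r : nat) (s : 'rV[R]_r) (t : R) : 'M[R]_r :=
  diag_mx (\row_i sin (s 0 i * t)).

Definition thin_svd (n r : nat) (D U : 'M[R]_(n, r)) (s : 'rV[R]_r)
    (V : 'M[R]_r) : Prop :=
  [/\ U^T *m U = 1%:M, V^T *m V = 1%:M /\ V *m V^T = 1%:M,
      (forall i, 0 <= s 0 i),
      (forall i j : 'I_r, (i <= j)%N -> s 0 j <= s 0 i)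
    & D = U *m diag_mx s *m V^T].

Definition geodesic (n r : nat) (X U : 'M[R]_(n, r)) (s : 'rV[R]_r)
    (V : 'M[R]_r) (t : R) : 'M[R]_(n, r) :=
  row_mx (X *m V) U *m col_mx (cosS s t) (sinS s t) *m V^T.

Definition transport (n r : nat) (X U : 'M[R]_(n, r)) (s : 'rV[R]_r)
    (V : 'M[R]_r) (t : R) : 'M[R]_n :=
  row_mx (X *m V) U *m col_mx (- sinS s t) (cosS s t) *m U^T
  + (1%:M - U *m U^T).

(* A (global coordinates, acting on vec of n x r matrices) is the operator
   corresponding to Ahat (local coordinates w.r.t. Xp): it maps
   vec(Xp D1) to vec(Xp D2) whenever vec(D2) = Ahat vec(D1), and it acts
   on vectorized matrices through the projection I (x) Xp Xp^T onto the
   tangent space. *)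
Definition global_op (n r k : nat) (Xp : 'M[R]_(n, k))
    (Ahat : 'M[R]_(r * k)) (A : 'M[R]_(r * n)) : Prop :=
  (forall D1 D2 : 'M[R]_(k, r),
      vec D2 = Ahat *m vec D1 -> A *m vec (Xp *m D1) = vec (Xp *m D2))
  /\ A = A *m kron (1%:M : 'M[R]_r) (Xp *m Xp^T).

End Grassmann.

From HB Require Import structures.
From mathcomp Require Import all_boot all_order all_algebra.
From mathcomp Require Import all_classical all_reals all_analysis.
From mathcomp Require Import ring.

Set Implicit Arguments.
Unset Strict Implicit.
Unset Printing Implicit Defensive.

Import Order.TTheory GRing.Theory Num.Theory.
Local Open Scope ring_scope.

(* Read on all vectors vec D, the definition of A says
   A (I (x) Xp) = (I (x) Xp) Ahat; with A = A (I (x) Xp Xp^T) and Xp^T Xp = I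
   this gives both coordinate formulas.  For the transported operator it then
   suffices that Xp(t) = T Xp has orthonormal columns and that
   Xp^T Ttil Xp(t) = I.  With P = T U = U cos(Sigma t) - X V sin(Sigma t) one
   has T = I + (P - U) U^T, and Ttil = I - (P - U) P^T: the thin SVD of
   -Delta(t) = -P Sigma V^T is not unique, but the transport matrix depends
   on it only through the matrices V f(Sigma) V^T, which are determined by the
   Gram matrix V Sigma^2 V^T.  Both identities then reduce to
   cos^2 + sin^2 = 1 and X^T U Sigma = 0. *)

Section Kronecker.
Variable R : comPzRingType.

Lemma kronE p q m k (A : 'M[R]_(p, q)) (B : 'M[R]_(m, k)) a i b j :
  kron A B (mxvec_index a i) (mxvec_index b j) = A a b * B i j.
Proof. by rewrite mxE /mxvec_index !cast_ordK !enum_rankK. Qed.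

Lemma vecE m k (M : 'M[R]_(m, k)) a i : vec M (mxvec_index a i) 0 = M i a.
Proof. by rewrite /vec mxE mxvecE mxE. Qed.

Lemma vec_surj m k (v : 'cV[R]_(k * m)) : vec (vec_mx v^T)^T = v.
Proof. by rewrite /vec trmxK vec_mxK trmxK. Qed.

Lemma mxvec_index_eq m k (a b : 'I_m) (i j : 'I_k) :
  (mxvec_index a i == mxvec_index b j) = (a == b) && (i == j).
Proof. by rewrite (inj_eq (@cast_ord_inj _ _ _)) (inj_eq (@enum_rank_inj _)). Qed.

Lemma mul_kron p q l m k h (A : 'M[R]_(p, q)) (B : 'M[R]_(m, k))
    (C : 'M[R]_(q, l)) (D : 'M[R]_(k, h)) :
  kron A B *m kron C D = kron (A *m C) (B *m D).
Proof.
apply/matrixP=> + +; case/mxvec_indexP=> a i; case/mxvec_indexP=> c d.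
rewrite mxE kronE !mxE (reindex _ (curry_mxvec_bij _ _)) /= big_distrl /=.
under [RHS]eq_bigr do rewrite big_distrr /=.
rewrite pair_bigA; apply: eq_bigr => -[b j] _ /=.
by rewrite !kronE mulrACA.
Qed.

Lemma kron1 m k : kron (1%:M : 'M[R]_m) (1%:M : 'M[R]_k) = 1%:M.
Proof.
apply/matrixP=> + +; case/mxvec_indexP=> a i; case/mxvec_indexP=> b j.
by rewrite kronE !mxE mxvec_index_eq -natrM mulnb.
Qed.

Lemma mul_kron1_vec m n k (X : 'M[R]_(n, m)) (D : 'M[R]_(m, k)) :
  kron (1%:M : 'M[R]_k) X *m vec D = vec (X *m D).
Proof.
apply/matrixP=> + z; rewrite (ord1 z); case/mxvec_indexP=> a i.
rewrite vecE !mxE (reindex _ (curry_mxvec_bij _ _)) /=.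
transitivity (\sum_(b < k) \sum_(j < m)
    kron 1%:M X (mxvec_index a i) (mxvec_index b j) * vec D (mxvec_index b j) 0).
  by rewrite pair_bigA; apply: eq_bigr => -[b j].
rewrite (bigD1 a) //= [X in _ + X]big1 ?addr0 => [|b /negPf nab].
  by apply: eq_bigr => j _; rewrite kronE vecE mxE eqxx mul1r.
by apply: big1 => j _; rewrite kronE mxE eq_sym nab !mul0r.
Qed.

Lemma kron1_mulmx_kron1 m n k l (A : 'M[R]_(m, n)) (B : 'M[R]_(n, k)) :
  kron (1%:M : 'M[R]_l) A *m kron 1%:M B = kron 1%:M (A *m B).
Proof. by rewrite mul_kron mul1mx. Qed.

Lemma col_mulmx_inj m p (M N : 'M[R]_(m, p)) :
  (forall v : 'cV_p, M *m v = N *m v) -> M = N.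
Proof.
move=> eqMN; apply/matrixP=> i j.
by have /matrixP/(_ i 0) := eqMN (delta_mx j 0); rewrite -!colE !mxE.
Qed.

Lemma kron1_conj_local n k r (Xp : 'M[R]_(n, k)) (T Tt : 'M[R]_n)
    (Ahat : 'M[R]_(r * k)) (A : 'M[R]_(r * n)) :
  A = kron (1%:M : 'M[R]_r) Xp *m Ahat *m kron 1%:M Xp^T ->
  (T *m Xp)^T *m (T *m Xp) = 1%:M -> Xp^T *m Tt *m (T *m Xp) = 1%:M ->
  kron (1%:M : 'M[R]_r) (T *m Xp)^T *m (kron 1%:M T *m A *m kron 1%:M Tt)
    *m kron 1%:M (T *m Xp) = Ahat.
Proof.
move=> -> isoTXp backTXp; set I := (1%:M : 'M[R]_r).
have left_inv : kron I (T *m Xp)^T *m kron I T *m kron I Xp = 1%:M.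
  by rewrite !kron1_mulmx_kron1 -mulmxA isoTXp kron1.
have right_inv : kron I Xp^T *m kron I Tt *m kron I (T *m Xp) = 1%:M.
  by rewrite !kron1_mulmx_kron1 backTXp kron1.
by rewrite !mulmxA -(mulmxA _ (kron I Xp^T)) -(mulmxA _ _ (kron I (T *m Xp)))
  right_inv mulmx1 left_inv mul1mx.
Qed.

End Kronecker.

Section GlobalCoordinates.
Variable R : realType.

Lemma global_op_local n k r (Xp : 'M[R]_(n, k)) (Ahat : 'M[R]_(r * k))
    (A : 'M[R]_(r * n)) :
  Xp^T *m Xp = 1%:M -> global_op Xp Ahat A ->
  A = kron (1%:M : 'M[R]_r) Xp *m Ahat *m kron 1%:M Xp^T
  /\ Ahat = kron (1%:M : 'M[R]_r) Xp^T *m A *m kron 1%:M Xp.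
Proof.
move=> XpXp [onvec onproj]; set K := kron _ Xp.
have AK : A *m K = K *m Ahat.
  apply: col_mulmx_inj => v.
  have := onvec (vec_mx v^T)^T (vec_mx (Ahat *m v)^T)^T.
  by rewrite !vec_surj -!mul_kron1_vec !vec_surj !mulmxA => ->.
have A_eq : A = K *m Ahat *m kron 1%:M Xp^T.
  by rewrite {1}onproj -kron1_mulmx_kron1 mulmxA AK.
split=> //; rewrite -mulmxA AK mulmxA kron1_mulmx_kron1 XpXp kron1.
by rewrite mul1mx.
Qed.

End GlobalCoordinates.

(* With [c = cos(Sigma t)] and [sn = sin(Sigma t)], this is the image [T U] of the
   left singular frame under the transport matrix. *)
Definition transported_frame (R : pzRingType) (n r : nat) (X U : 'M[R]_(n, r))
    (V c sn : 'M[R]_r) : 'M[R]_(n, r) :=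
  U *m c - X *m (V *m sn).

Section TransportAlgebra.
Variables (R : comPzRingType) (n r : nat).
Variables (X U : 'M[R]_(n, r)) (V c sn : 'M[R]_r).
Hypotheses (UU : U^T *m U = 1%:M) (XX : X^T *m X = 1%:M) (VV : V^T *m V = 1%:M).
Hypotheses (cT : c^T = c) (snT : sn^T = sn).
Hypothesis (c_sn_sq : c *m c + sn *m sn = 1%:M).
(* [U] need not be orthogonal to [X]: [X^T Delta = 0] only gives [X^T U Sigma = 0],
   hence this weaker condition. *)
Hypothesis (XU_c : X^T *m U *m c = X^T *m U).

Local Notation P := (transported_frame X U V c sn).

Lemma transported_frame_subE : P - U = U *m (c - 1%:M) - X *m (V *m sn).
Proof. by rewrite /transported_frame mulmxBr mulmx1 addrAC. Qed.

Lemma tr_transported_frame_sub :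
  (P - U)^T = (c - 1%:M) *m U^T - sn *m V^T *m X^T.
Proof.
by rewrite transported_frame_subE raddfB /= !trmx_mul raddfB /= trmx1 cT snT.
Qed.

Lemma tr_c_sub1 : (c - 1%:M)^T = c - 1%:M.
Proof. by rewrite raddfB /= trmx1 cT. Qed.

Lemma trXU_c1 : X^T *m U *m (c - 1%:M) = 0.
Proof. by rewrite mulmxBr XU_c mulmx1 subrr. Qed.

Lemma c1_trUX : (c - 1%:M) *m U^T *m X = 0.
Proof.
by apply: trmx_inj; rewrite !trmx_mul trmxK tr_c_sub1 trmx0 mulmxA trXU_c1.
Qed.

Lemma tr_transported_frame_sub_mulX : (P - U)^T *m X = - (sn *m V^T).
Proof.
rewrite tr_transported_frame_sub mulmxBl c1_trUX sub0r.
by rewrite -[_ *m X^T *m X]mulmxA XX mulmx1.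
Qed.

Lemma tr_transported_frame_sub_mulU k (W : 'M[R]_(r, k)) :
  X^T *m U *m W = 0 -> (P - U)^T *m U *m W = (c - 1%:M) *m W.
Proof.
move=> XUW; rewrite tr_transported_frame_sub mulmxBl -(mulmxA _ U^T) UU mulmx1.
by rewrite mulmxBl -!mulmxA (mulmxA X^T) XUW !mulmx0 subr0.
Qed.

Lemma sub1_sq_add_sq : (c - 1%:M) *m (c - 1%:M) + sn *m sn = (1%:M - c) *+ 2.
Proof.
rewrite mulmxBr mulmxBl mul1mx mulmx1 addrAC [_ - c + _]addrAC c_sn_sq.
by rewrite opprB mulr2n.
Qed.

Lemma tr_transported_frame_sub_sq :
  (P - U)^T *m (P - U) = (1%:M - c) *+ 2.
Proof.
rewrite {2}transported_frame_subE mulmxBr !mulmxA.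
rewrite tr_transported_frame_sub_mulU ?trXU_c1 // tr_transported_frame_sub_mulX.
by rewrite !mulNmx opprK -(mulmxA sn) VV mulmx1 sub1_sq_add_sq.
Qed.

Lemma gram_add_transported_frame_sub k (M : 'M[R]_(n, k)) (a : 'M[R]_(r, k)) :
  M^T *m (P - U) = a^T *m (c - 1%:M) ->
  (M + (P - U) *m a)^T *m (M + (P - U) *m a) = M^T *m M.
Proof.
move=> ME; have EM : (P - U)^T *m M = (c - 1%:M) *m a.
  by apply: trmx_inj; rewrite !trmx_mul trmxK ME tr_c_sub1.
rewrite [(_ + _)^T]raddfD /= trmx_mul mulmxDl !mulmxDr mulmxA ME.
rewrite -[a^T *m _ *m M]mulmxA EM -[a^T *m _ *m (_ *m a)]mulmxA.
rewrite [(P - U)^T *m _]mulmxA tr_transported_frame_sub_sq !mulmxA.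
rewrite -mulmxDl -mulmxDr -addrA -mulmxDl -mulmxDr -[1%:M - c]opprB mulr2n.
by rewrite (addrA (c - 1%:M)) -opprD subrr mulmx0 mul0mx addr0.
Qed.

Lemma transported_frame_isometry k (W : 'M[R]_(r, k)) :
  X^T *m U *m W = 0 -> (P *m W)^T *m (P *m W) = W^T *m W.
Proof.
move=> XUW; have -> : P *m W = U *m W + (P - U) *m W.
  by rewrite -mulmxDl addrC subrK.
rewrite gram_add_transported_frame_sub.
  by rewrite trmx_mul mulmxA -(mulmxA W^T) UU mulmx1.
apply: trmx_inj; rewrite !trmx_mul trmxK tr_c_sub1 mulmxA.
by rewrite trmxK; apply: tr_transported_frame_sub_mulU.
Qed.

Hypothesis c_sn_comm : c *m sn = sn *m c.

Lemma transported_frame_geodesic_frame :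
  P *m c + (X *m (V *m c) + U *m sn) *m sn = U.
Proof.
rewrite /transported_frame mulmxBl mulmxDl -!mulmxA -c_sn_comm addrA subrK.
by rewrite -mulmxDr c_sn_sq mulmx1.
Qed.

Variables (k : nat) (Xp : 'M[R]_(n, k)).
Hypotheses (XpX : Xp^T *m X = 0) (XpXp : Xp^T *m Xp = 1%:M).

Lemma trXp_transported_frame_sub : Xp^T *m (P - U) = (U^T *m Xp)^T *m (c - 1%:M).
Proof.
by rewrite transported_frame_subE mulmxBr !mulmxA XpX !mul0mx subr0 trmx_mul trmxK.
Qed.

Lemma transport_trXp_isometry (T := 1%:M + (P - U) *m U^T) :
  (T *m Xp)^T *m (T *m Xp) = 1%:M.
Proof.
have -> : T *m Xp = Xp + (P - U) *m (U^T *m Xp) by rewrite mulmxDl mul1mx mulmxA.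
by rewrite gram_add_transported_frame_sub ?trXp_transported_frame_sub.
Qed.

Lemma tr_transported_frame_mulXp : P^T *m Xp = c *m (U^T *m Xp).
Proof.
have XXp : X^T *m Xp = 0 by apply: trmx_inj; rewrite trmx_mul trmxK XpX trmx0.
rewrite raddfB /= !trmx_mul cT snT mulmxBl -!mulmxA XXp !mulmx0 subr0.
by rewrite mulmxA.
Qed.

Lemma c1_tr_transported_frame_mul_sub :
  (c - 1%:M) *m (P^T *m (P - U)) = (c - 1%:M) *m (1%:M - c).
Proof.
rewrite mulmxA.
have -> : P^T = U^T + (P - U)^T by rewrite [(P - U)^T]raddfB /= addrC subrK.
have UE : (c - 1%:M) *m U^T *m (P - U) = (c - 1%:M) *m (c - 1%:M).
  apply: trmx_inj; rewrite !trmx_mul tr_c_sub1 trmxK mulmxA.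
  by rewrite tr_transported_frame_sub_mulU ?trXU_c1.
have EE : (c - 1%:M) *m (P - U)^T *m (P - U) = (c - 1%:M) *m ((1%:M - c) *+ 2).
  by rewrite -mulmxA tr_transported_frame_sub_sq.
rewrite (mulmxDr (c - 1%:M) U^T) (mulmxDl _ _ (P - U)).
by rewrite UE EE -mulmxDr -[1%:M - c]opprB mulr2n addNKr.
Qed.

Lemma transport_back_trXp (T := 1%:M + (P - U) *m U^T) :
  Xp^T *m (1%:M - (P - U) *m P^T) *m (T *m Xp) = 1%:M.
Proof.
have -> : T *m Xp = Xp + (P - U) *m (U^T *m Xp) by rewrite mulmxDl mul1mx mulmxA.
have -> : Xp^T *m (1%:M - (P - U) *m P^T) = Xp^T - (U^T *m Xp)^T *m (c - 1%:M) *m P^T.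
  by rewrite mulmxBr mulmx1 mulmxA trXp_transported_frame_sub.
set a := U^T *m Xp.
have LXp : (Xp^T - a^T *m (c - 1%:M) *m P^T) *m Xp
    = 1%:M - a^T *m ((c - 1%:M) *m c) *m a.
  by rewrite mulmxBl XpXp -[_ *m P^T *m Xp]mulmxA tr_transported_frame_mulXp !mulmxA.
have LE : (Xp^T - a^T *m (c - 1%:M) *m P^T) *m (P - U)
    = a^T *m ((c - 1%:M) *m c).
  rewrite mulmxBl trXp_transported_frame_sub -/a -[_ *m P^T *m _]mulmxA.
  rewrite -mulmxA c1_tr_transported_frame_mul_sub -mulmxBr -{1}(mulmx1 (c - 1%:M)).
  by rewrite -mulmxBr opprB (addrC 1%:M) subrK.
by rewrite mulmxDr LXp (mulmxA _ (P - U)) LE subrK.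
Qed.

End TransportAlgebra.

Section DiagFun.
Variables (R : numDomainType) (r : nat).
Implicit Types (f g : R -> R) (s : 'rV[R]_r).

Definition diag_fun f s : 'M[R]_r := diag_mx (\row_i f (s 0 i)).

Lemma eq_diag_fun f g s :
  (forall i, f (s 0 i) = g (s 0 i)) -> diag_fun f s = diag_fun g s.
Proof. by move=> eq_fg; congr diag_mx; apply/rowP=> i; rewrite !mxE. Qed.

Lemma diag_fun_id s : diag_fun id s = diag_mx s.
Proof. by congr diag_mx; apply/rowP=> i; rewrite !mxE. Qed.

Lemma diag_fun_cst a s : diag_fun (fun=> a) s = a%:M.
Proof. by rewrite -diag_const_mx; congr diag_mx; apply/rowP=> i; rewrite !mxE. Qed.

Lemma diag_funM f g s :
  diag_fun f s *m diag_fun g s = diag_fun (fun x => f x * g x) s.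
Proof. by rewrite mulmx_diag; congr diag_mx; apply/rowP=> i; rewrite !mxE. Qed.

Lemma diag_funD f g s :
  diag_fun f s + diag_fun g s = diag_fun (fun x => f x + g x) s.
Proof. by rewrite -raddfD; congr diag_mx; apply/rowP=> i; rewrite !mxE. Qed.

Lemma diag_funB f g s :
  diag_fun f s - diag_fun g s = diag_fun (fun x => f x - g x) s.
Proof. by rewrite -raddfB; congr diag_mx; apply/rowP=> i; rewrite !mxE. Qed.

Lemma diag_funC f g s :
  diag_fun f s *m diag_fun g s = diag_fun g s *m diag_fun f s.
Proof. by rewrite !diag_funM; apply: eq_diag_fun => i; rewrite mulrC. Qed.

Lemma mul_diag_fun_ker k (W : 'M[R]_(k, r)) f s :
  W *m diag_mx s = 0 -> W *m diag_fun f s = f 0 *: W.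
Proof.
move=> /matrixP Ws0; apply/matrixP=> i j; move: (Ws0 i j).
rewrite !mul_mx_diag !mxE; have [->|s_neq0] := eqVneq (s 0 j) 0.
  by move=> _; rewrite mulrC.
by move/eqP; rewrite mulf_eq0 (negPf s_neq0) orbF => /eqP->; rewrite mulr0 mul0r.
Qed.

(* A matrix intertwining the squares of two nonnegative diagonals intertwines
   any function of them, since squaring is injective on nonnegatives. *)
Lemma diag_fun_intertwine (O : 'M[R]_r) s1 s2 f :
  (forall i, 0 <= s1 0 i) -> (forall i, 0 <= s2 0 i) ->
  O *m diag_fun (fun x => x ^+ 2) s1 = diag_fun (fun x => x ^+ 2) s2 *m O ->
  O *m diag_fun f s1 = diag_fun f s2 *m O.
Proof.
move=> s1_ge0 s2_ge0 /matrixP intertw; apply/matrixP=> i j; move: (intertw i j).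
rewrite !mul_mx_diag !mul_diag_mx !mxE; have [->|O_neq0] := eqVneq (O i j) 0.
  by rewrite !mulr0 !mul0r.
move/eqP; rewrite mulrC -subr_eq0 -mulrBl mulf_eq0 (negPf O_neq0) orbF subr_eq0.
by rewrite eqrXn2 // => /eqP->; rewrite mulrC.
Qed.

Lemma conj_diag_fun_eq (V1 V2 : 'M[R]_r) s1 s2 f :
  V1^T *m V1 = 1%:M -> V1 *m V1^T = 1%:M ->
  V2^T *m V2 = 1%:M -> V2 *m V2^T = 1%:M ->
  (forall i, 0 <= s1 0 i) -> (forall i, 0 <= s2 0 i) ->
  V1 *m diag_fun (fun x => x ^+ 2) s1 *m V1^T
    = V2 *m diag_fun (fun x => x ^+ 2) s2 *m V2^T ->
  V1 *m diag_fun f s1 *m V1^T = V2 *m diag_fun f s2 *m V2^T.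
Proof.
move=> V1tV1 V1V1t V2tV2 V2V2t s1_ge0 s2_ge0 eq_sq; set O := V2^T *m V1.
have /diag_fun_intertwine intertw : O *m diag_fun (fun x => x ^+ 2) s1
    = diag_fun (fun x => x ^+ 2) s2 *m O.
  transitivity (V2^T *m (V1 *m diag_fun (fun x => x ^+ 2) s1 *m V1^T) *m V1).
    by rewrite !mulmxA -(mulmxA _ V1^T) V1tV1 mulmx1.
  by rewrite eq_sq !mulmxA V2tV2 mul1mx.
transitivity (V2 *m (O *m diag_fun f s1) *m V1^T).
  by rewrite !mulmxA V2V2t mul1mx.
by rewrite intertw // !mulmxA -(mulmxA _ V1) V1V1t mulmx1.
Qed.

Lemma tr_diag_mx_sq s : (diag_mx s)^T *m diag_mx s = diag_fun (fun x => x ^+ 2) s.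
Proof.
rewrite tr_diag_mx -diag_fun_id diag_funM.
by apply: eq_diag_fun => i; rewrite expr2.
Qed.

End DiagFun.

Section Trigonometric.
Variables (R : realType) (r : nat).
Implicit Types (s : 'rV[R]_r) (t : R).

(* Chosen so that [cos (x t) - 1 = x * cosm1_div_sq t x * x] and
   [sin (x t) = sin_div t x * x]; at [x = 0] both hold because [_ / 0 = 0]. *)
Definition cosm1_div_sq t (x : R) := (cos (x * t) - 1) / x ^+ 2.
Definition sin_div t (x : R) := sin (x * t) / x.

Lemma cosS_sub1 s t :
  cosS s t - 1%:M = diag_mx s *m diag_fun (cosm1_div_sq t) s *m diag_mx s.
Proof.
rewrite -[cosS s t]/(diag_fun (fun x => cos (x * t)) s).
rewrite -diag_fun_id -(diag_fun_cst 1 s) diag_funB !diag_funM.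
apply: eq_diag_fun => i; rewrite /cosm1_div_sq; set x := s 0 i.
by have [->|x_neq0] := eqVneq x 0; [rewrite !mul0r cos0 subrr | field].
Qed.

Lemma sinS_diag s t : sinS s t = diag_fun (sin_div t) s *m diag_mx s.
Proof.
rewrite -[sinS s t]/(diag_fun (fun x => sin (x * t)) s) -diag_fun_id diag_funM.
apply: eq_diag_fun => i; rewrite /sin_div; set x := s 0 i.
by have [->|x_neq0] := eqVneq x 0; [rewrite mul0r sin0 mulr0 | field].
Qed.

Lemma cosS_sq_add_sinS_sq s t : cosS s t *m cosS s t + sinS s t *m sinS s t = 1%:M.
Proof.
rewrite -[cosS s t]/(diag_fun (fun x => cos (x * t)) s).
rewrite -[sinS s t]/(diag_fun (fun x => sin (x * t)) s).
rewrite !diag_funM diag_funD -(diag_fun_cst 1 s); apply: eq_diag_fun => i.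
by rewrite -!expr2 cos2Dsin2.
Qed.

Lemma cosS_sinS_comm s t : cosS s t *m sinS s t = sinS s t *m cosS s t.
Proof. exact: (diag_funC (fun x => cos (x * t)) (fun x => sin (x * t))). Qed.

End Trigonometric.

Section Transport.
Variables (R : realType) (n r : nat).
Implicit Types (X Y U D : 'M[R]_(n, r)) (V : 'M[R]_r) (s : 'rV[R]_r) (t : R).

Lemma transportE X U s V t :
  transport X U s V t
  = 1%:M + (transported_frame X U V (cosS s t) (sinS s t) - U) *m U^T.
Proof.
rewrite /transport /transported_frame mul_row_col mulmxN -mulmxA.
by rewrite (addrC (- _)) !mulmxBl addrCA.
Qed.

Lemma geodesic_mulV X U s V t : V^T *m V = 1%:M ->
  geodesic X U s V t *m V = X *m (V *m cosS s t) + U *m sinS s t.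
Proof. by move=> VV; rewrite /geodesic mul_row_col -mulmxA VV mulmx1 mulmxA. Qed.

Lemma svd_gram D U s V : thin_svd D U s V ->
  D^T *m D = V *m diag_fun (fun x => x ^+ 2) s *m V^T.
Proof.
move=> [UU _ _ _ ->]; rewrite !trmx_mul trmxK !mulmxA -(mulmxA _ U^T) UU mulmx1.
by rewrite -(mulmxA V (diag_mx s)^T) tr_diag_mx_sq.
Qed.

Lemma transport_svdE Y U s V t D : thin_svd D U s V ->
  transport Y U s V t = 1%:M
    + D *m (V *m diag_fun (cosm1_div_sq t) s *m V^T) *m D^T
    - Y *m (V *m diag_fun (sin_div t) s *m V^T) *m D^T.
Proof.
move=> [UU [VV _] _ _ ->]; rewrite transportE transported_frame_subE mulmxBl addrA.
rewrite !trmx_mul trmxK tr_diag_mx; congr (_ + _ - _).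
  rewrite cosS_sub1 !mulmxA -(mulmxA _ V^T V) VV mulmx1.
  by rewrite -(mulmxA _ V^T V) VV mulmx1.
by rewrite sinS_diag !mulmxA -(mulmxA _ V^T V) VV mulmx1.
Qed.

(* The transport matrix depends on the direction only through the spectral
   decomposition of its Gram matrix, not on the chosen thin SVD. *)
Lemma transport_gram Y U2 s2 V2 t D V s : thin_svd D U2 s2 V2 ->
  V^T *m V = 1%:M -> V *m V^T = 1%:M -> (forall i, 0 <= s 0 i) ->
  D^T *m D = V *m diag_fun (fun x => x ^+ 2) s *m V^T ->
  transport Y U2 s2 V2 t = 1%:M
    + D *m (V *m diag_fun (cosm1_div_sq t) s *m V^T) *m D^T
    - Y *m (V *m diag_fun (sin_div t) s *m V^T) *m D^T.
Proof.
move=> svd VV VV' s_ge0 gram; have [_ [V2V2 V2V2'] s2_ge0 _ _] := svd.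
have conj_eq f : V2 *m diag_fun f s2 *m V2^T = V *m diag_fun f s *m V^T.
  by apply: conj_diag_fun_eq => //; rewrite -gram (svd_gram svd).
by rewrite (transport_svdE _ _ svd) !conj_eq.
Qed.

Lemma transport_neg_frame Y U2 s2 V2 t W V s :
  thin_svd (- (W *m diag_mx s *m V^T)) U2 s2 V2 ->
  V^T *m V = 1%:M -> V *m V^T = 1%:M -> (forall i, 0 <= s 0 i) ->
  (W *m diag_mx s)^T *m (W *m diag_mx s) = (diag_mx s)^T *m diag_mx s ->
  transport Y U2 s2 V2 t
    = 1%:M + W *m (cosS s t - 1%:M) *m W^T + Y *m V *m sinS s t *m W^T.
Proof.
move=> svd2 VV VV' s_ge0 WS_iso.
rewrite (transport_gram _ _ svd2 VV VV' s_ge0); last first.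
  rewrite [(- _)^T]raddfN /= mulNmx mulmxN opprK -tr_diag_mx_sq -WS_iso.
  by rewrite !trmx_mul trmxK !mulmxA.
rewrite [(- _)^T]raddfN /= mulNmx !mulmxN mulNmx opprK !trmx_mul trmxK tr_diag_mx.
rewrite cosS_sub1 sinS_diag -!mulmxA !(mulmxA V^T V) VV !mul1mx.
by rewrite opprK.
Qed.

End Transport.

Section GeodesicTransport.
Variables (R : realType) (n r : nat).
Variables (X U D : 'M[R]_(n, r)) (s : 'rV[R]_r) (V : 'M[R]_r) (t : R).
Hypotheses (XX : X^T *m X = 1%:M) (svd : thin_svd D U s V) (XD : X^T *m D = 0).

Local Notation c := (cosS s t).
Local Notation sn := (sinS s t).
Local Notation P := (transported_frame X U V c sn).

Lemma trX_svd_frame : X^T *m U *m diag_mx s = 0.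
Proof.
have [_ [VV _] _ _ De] := svd.
have <- : X^T *m D *m V = X^T *m U *m diag_mx s.
  by rewrite De !mulmxA -(mulmxA _ V^T) VV mulmx1.
by rewrite XD mul0mx.
Qed.

Lemma trX_svd_frame_cosS : X^T *m U *m c = X^T *m U.
Proof.
rewrite -[cosS s t]/(diag_fun (fun x => cos (x * t)) s).
by rewrite (mul_diag_fun_ker _ trX_svd_frame) mul0r cos0 scale1r.
Qed.

Lemma transport_mul_svd : transport X U s V t *m D = P *m diag_mx s *m V^T.
Proof.
have [UU _ _ _ De] := svd.
rewrite transportE {1}De mulmxDl mul1mx !mulmxA -(mulmxA _ U^T U) UU mulmx1.
by rewrite -!mulmxDl addrC subrK.
Qed.

Lemma transport_geodesic_back U2 s2 V2 :
  thin_svd (- (transport X U s V t *m D)) U2 s2 V2 ->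
  transport (geodesic X U s V t) U2 s2 V2 t = 1%:M - (P - U) *m P^T.
Proof.
have [UU [VV VV'] s_ge0 _ _] := svd.
have c_sn_sq := cosS_sq_add_sinS_sq s t.
rewrite transport_mul_svd => /transport_neg_frame -> //; last first.
  by apply: transported_frame_isometry => //; [exact: tr_diag_mx |
    exact: tr_diag_mx | exact: trX_svd_frame_cosS | exact: trX_svd_frame].
rewrite (geodesic_mulV _ _ _ _ VV) -addrA -!mulmxDl mulmxBr mulmx1 addrAC.
rewrite (transported_frame_geodesic_frame X U V c_sn_sq (cosS_sinS_comm s t)).
by rewrite -opprB mulNmx.
Qed.

End GeodesicTransport.

Theorem theorem6p4 (R : realType) (n r : nat)
    (X : 'M[R]_(n, r)) (Xp : 'M[R]_(n, n - r)) (Delta : 'M[R]_(n, r))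
    (U : 'M[R]_(n, r)) (s : 'rV[R]_r) (V : 'M[R]_r)
    (Ahat : 'M[R]_(r * (n - r))) (A : 'M[R]_(r * n)) :
  (r <= n)%N ->
  X^T *m X = 1%:M ->
  (row_mx X Xp)^T *m row_mx X Xp = 1%:M ->
  row_mx X Xp *m (row_mx X Xp)^T = 1%:M ->
  X^T *m Delta = 0 ->
  thin_svd Delta U s V ->
  global_op Xp Ahat A ->
  [/\ A = kron (1%:M : 'M[R]_r) Xp *m Ahat *m kron (1%:M : 'M[R]_r) Xp^T,
      Ahat = kron (1%:M : 'M[R]_r) Xp^T *m A *m kron (1%:M : 'M[R]_r) Xp
    & forall (t : R) (U2 : 'M[R]_(n, r)) (s2 : 'rV[R]_r) (V2 : 'M[R]_r),
        let T := transport X U s V t in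
        let Xt := geodesic X U s V t in
        let Deltat := T *m Delta in
        thin_svd (- Deltat) U2 s2 V2 ->
        let Ttil := transport Xt U2 s2 V2 t in
        let At := kron (1%:M : 'M[R]_r) T *m A *m kron (1%:M : 'M[R]_r) Ttil in
        let Xpt := T *m Xp in
        kron (1%:M : 'M[R]_r) Xpt^T *m At *m kron (1%:M : 'M[R]_r) Xpt = Ahat].
Proof.
move=> _ XX orth _ XD svd gop.
move: orth; rewrite tr_row_mx mul_col_row (scalar_mx_block r (n - r)).
move=> /eq_block_mx [_ _ XpX XpXp].
have [A_eq Ahat_eq] := global_op_local XpXp gop.
split=> // t U2 s2 V2 T Xt Deltat svd2 Ttil At Xpt.
have [UU [VV _] _ _ _] := svd.
have cT : (cosS s t)^T = cosS s t := tr_diag_mx _.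
have snT : (sinS s t)^T = sinS s t := tr_diag_mx _.
have XU_c := trX_svd_frame_cosS t svd XD.
have c_sn_sq := cosS_sq_add_sinS_sq s t.
apply: kron1_conj_local A_eq _ _; rewrite /Xpt /T transportE.
  exact: transport_trXp_isometry.
rewrite /Ttil /Xt (transport_geodesic_back XX svd XD svd2).
exact: transport_back_trXp.
Qed.
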